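(* Let $(E\xrightarrow{Q}K,\gamma)$ be a projected cone with dual projected cone $(F\xrightarrow{P}N,\delta)$, let $\gamma_0\preceq\gamma$ be a face and $\delta_0:=\gamma_0^{*}$. Then the following are equivalent: (i) $P$ maps $\mathrm{lin}(\delta_0)\cap F$ onto $N$; (ii) $Q$ maps $\mathrm{lin}(\gamma_0)\cap E$ isomorphically onto a primitive sublattice of $K$.
   Context: Lattices are finitely generated free abelian groups, $E_{\mathbb Q}:=\mathbb Q\otimes E$; $\mathrm{lin}$ denotes linear span; a sublattice $K_0\subset K$ is primitive if $K/K_0$ is torsion free. A projected cone $(E\xrightarrow{Q}K,\gamma)$ is a surjective lattice homomorphism $Q\colon E\to K$ with a simplicial full-dimensional convex polyhedral cone $\gamma\subset E_{\mathbb Q}$. Its dual projected cone $(F\xrightarrow{P}N,\delta)$: $M:=\ker Q$, $F:=\mathrm{Hom}(E,\mathbb Z)$, $N:=\mathrm{Hom}(M,\mathbb Z)$, $P\colon F\to N$ restriction, $\delta:=\gamma^\vee$. For $\gamma_0\preceq\gamma$, $\gamma_0^*:=\gamma_0^\perp\cap\delta$. *)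

(* Coordinate model: E = Z^n (integer column vectors),
   K = Z^k, Q : E -> K an integer k x n matrix, F = Hom(E,Z) = integer row
   vectors with the pairing f *m x, E_Q = rat column vectors. *)
From mathcomp Require Import all_boot all_order all_algebra.
Set Implicit Arguments. Unset Strict Implicit. Unset Printing Implicit Defensive.
Import GRing.Theory Num.Theory.
Local Open Scope ring_scope.

Definition intcv n (x : 'cV[int]_n) : 'cV[rat]_n := map_mx (fun z : int => z%:~R) x.
Definition intrv n (f : 'rV[int]_n) : 'rV[rat]_n := map_mx (fun z : int => z%:~R) f.

Definition pairQ n (u : 'rV[rat]_n) (x : 'cV[rat]_n) : rat := (u *m x) 0 0.
Definition pairZ n (f : 'rV[int]_n) (x : 'cV[int]_n) : int := (f *m x) 0 0.

(* simplicial full-dimensional cone generated by the columns of B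
   (B invertible is required separately) *)
Definition simplicial_cone n (B : 'M[rat]_n) : 'cV[rat]_n -> Prop :=
  fun x => exists c : 'cV[rat]_n, (forall i, 0 <= c i 0) /\ x = B *m c.

Definition dual_cone n (g : 'cV[rat]_n -> Prop) : 'rV[rat]_n -> Prop :=
  fun u => forall x, g x -> 0 <= pairQ u x.

Definition is_face n (g g0 : 'cV[rat]_n -> Prop) : Prop :=
  exists u, dual_cone g u /\ forall x, g0 x <-> (g x /\ pairQ u x = 0).

Definition face_star n (g g0 : 'cV[rat]_n -> Prop) : 'rV[rat]_n -> Prop :=
  fun u => dual_cone g u /\ forall x, g0 x -> pairQ u x = 0.

Definition lin (V : lmodType rat) (S : V -> Prop) : V -> Prop :=
  fun x => exists (m : nat) (c : 'I_m -> rat) (v : 'I_m -> V),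
    (forall i, S (v i)) /\ x = \sum_(i < m) c i *: v i.

(* a sublattice L of Z^k is primitive iff Z^k / L is torsion free *)
Definition primitive k (L : 'cV[int]_k -> Prop) : Prop :=
  forall (y : 'cV[int]_k) (m : int), m != 0 -> L (m *: y) -> L y.

From mathcomp Require Import all_boot all_order all_algebra zify.
Set Implicit Arguments. Unset Strict Implicit. Unset Printing Implicit Defensive.
Import GRing.Theory Num.Theory.
Local Open Scope ring_scope.

(* As gamma is simplicial, lin(gamma0) is spanned by the columns of B lying in
   gamma0, and lin(delta0) by the complementary rows of B^-1; so lin(delta0) /\ F
   consists exactly of the integer functionals vanishing on L = lin(gamma0) /\ E.
   (i) -> (ii): every coordinate function of M = ker Q extends to a functional
   killing L.  Hence L /\ M = 0, and if m y = Q x with x in L and Q e = y, the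
   kernel vector x - m e is divisible by m, which puts y in Q(L).
   (ii) -> (i): extend phi to all of E through a section of Q, then subtract
   t o Q to make it vanish on L.  Such an integral t exists (Smith normal form)
   as soon as the functional takes integral values on every rational vector of
   lin(gamma0) with integral image under Q, and by (ii) such a vector lies in L. *)

Notation ratmx A := (map_mx (fun z : int => (z%:~R : rat)) A).

Lemma ratmxM m n p (A : 'M[int]_(m, n)) (B : 'M[int]_(n, p)) :
  ratmx (A *m B) = ratmx A *m ratmx B.
Proof. exact: map_mxM. Qed.

Lemma ratmx1 n : ratmx (1%:M : 'M[int]_n) = 1%:M.
Proof. exact: map_mx1. Qed.

Lemma intcvZ n (m : int) (x : 'cV[int]_n) : intcv (m *: x) = m%:~R *: intcv x.
Proof. by apply/matrixP=> i j; rewrite !mxE intrM. Qed.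

Lemma intcvM k n (Q : 'M[int]_(k, n)) x : intcv (Q *m x) = ratmx Q *m intcv x.
Proof. exact: map_mxM. Qed.

Lemma intcv_inj n : injective (@intcv n).
Proof.
move=> x y /matrixP xy; apply/matrixP=> i j.
by have := xy i j; rewrite !mxE => /intr_inj.
Qed.

Lemma pairZ_intr n (f : 'rV[int]_n) x : (pairZ f x)%:~R = pairQ (intrv f) (intcv x).
Proof. by rewrite /pairZ /pairQ /intrv /intcv -map_mxM [RHS]mxE. Qed.

Lemma pairZB n (f : 'rV[int]_n) x y : pairZ f (x - y) = pairZ f x - pairZ f y.
Proof. by rewrite /pairZ mulmxBr !mxE. Qed.

Lemma pairZZ n (f : 'rV[int]_n) m x : pairZ f (m *: x) = m * pairZ f x.
Proof. by rewrite /pairZ -scalemxAr mxE. Qed.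

Lemma mulmx_sum_col (R : comNzRingType) m n (A : 'M[R]_(m, n)) (c : 'cV_n) :
  A *m c = \sum_j c j 0 *: col j A.
Proof.
by apply/matrixP=> i k; rewrite ord1 mxE summxE; apply: eq_bigr => j _; rewrite !mxE mulrC.
Qed.

Section Span.
Variables (V : lmodType rat) (S : V -> Prop).

Lemma lin_scale r x : lin S x -> lin S (r *: x).
Proof.
move=> [m [c [v [Sv ->]]]]; exists m, (fun i => r * c i), v; split=> //.
by rewrite scaler_sumr; apply: eq_bigr => i _; rewrite scalerA.
Qed.

Lemma lin_sum_support m (c : 'I_m -> rat) (v : 'I_m -> V) :
  S 0 -> (forall i, c i != 0 -> S (v i)) -> lin S (\sum_i c i *: v i).
Proof.
move=> S0 Sv; exists m, c, (fun i => if c i == 0 then 0 else v i); split.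
  by move=> i; case: eqVneq => [//|/Sv].
by apply: eq_bigr => i _; case: eqVneq => [->|]; rewrite ?scale0r ?scaler0.
Qed.

End Span.

Lemma lin_intcvZ n (S : 'cV[rat]_n -> Prop) (c : int) x :
  lin S (intcv x) -> lin S (intcv (c *: x)).
Proof. by rewrite intcvZ; exact: lin_scale. Qed.

Lemma lin_intcv_divZ n (S : 'cV[rat]_n -> Prop) (c : int) x :
  c != 0 -> lin S (intcv (c *: x)) -> lin S (intcv x).
Proof.
move=> c_nz; rewrite intcvZ => /(lin_scale (c%:~R)^-1).
by rewrite scalerA mulVf ?intr_eq0 // scale1r.
Qed.

Lemma lin_face_star_orth n (g g0 : 'cV[rat]_n -> Prop) u x :
  lin g0 x -> lin (face_star g g0) u -> pairQ u x = 0.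
Proof.
move=> [m [c [v [g0v ->]]]] [m' [c' [v' [starv' ->]]]].
rewrite /pairQ mulmx_suml big1 ?mxE // => i _.
rewrite -scalemxAl mulmx_sumr big1 ?scaler0 // => j _.
have [_ orth] := starv' i.
rewrite -scalemxAr; apply/matrixP=> a b; rewrite !ord1 [LHS]mxE [RHS]mxE.
by rewrite -[(v' i *m v j) 0 0]/(pairQ _ _) orth ?mulr0.
Qed.

Section SimplicialFace.
Variables (n : nat) (B : 'M[rat]_n) (g0 : 'cV[rat]_n -> Prop) (u : 'rV[rat]_n).
Hypothesis B_unit : B \in unitmx.
Hypothesis u_dual : dual_cone (simplicial_cone B) u.
Hypothesis g0E : forall x, g0 x <-> simplicial_cone B x /\ pairQ u x = 0.

Let a := u *m B.

Lemma simplicial_cone_col j : simplicial_cone B (col j B).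
Proof.
exists (delta_mx j (0 : 'I_1)); split; last exact: colE.
by move=> i; rewrite mxE; case: (_ && _).
Qed.

Lemma pair_row_invmx j c : pairQ (row j (invmx B)) (B *m c) = c j 0.
Proof. by rewrite /pairQ mulmxA -row_mul mulVmx // row1 -rowE mxE. Qed.

Lemma face0 : g0 0.
Proof.
apply/g0E; split; last by rewrite /pairQ mulmx0 mxE.
by exists 0; split; [move=> i; rewrite mxE | rewrite mulmx0].
Qed.

Lemma face_col j : a 0 j = 0 -> g0 (col j B).
Proof.
move=> aj0; apply/g0E; split; first exact: simplicial_cone_col.
by rewrite /pairQ colE mulmxA -colE mxE.
Qed.

Lemma face_star0 : face_star (simplicial_cone B) g0 0.
Proof. by split=> x _; rewrite /pairQ mul0mx mxE. Qed.

(* [u] is nonnegative on the columns of [B], so on a point [B c] of the face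
   every [a j * c j] vanishes. *)
Lemma face_star_row_invmx j : a 0 j != 0 ->
  face_star (simplicial_cone B) g0 (row j (invmx B)).
Proof.
move=> aj0; split=> [x [c [c_ge0 ->]]|x /g0E [[c [c_ge0 ->]] ux0]].
  by rewrite pair_row_invmx.
rewrite pair_row_invmx; apply/eqP; rewrite -(mulIr_eq0 _ (mulIf aj0)).
move: ux0; rewrite /pairQ mulmxA mxE => /eqP; rewrite psumr_eq0 => [/allP|i _].
  by move=> /(_ j (mem_index_enum j)) /implyP /(_ isT); rewrite mulrC.
rewrite mulr_ge0 //; have := u_dual (simplicial_cone_col i).
by rewrite /pairQ colE mulmxA -colE mxE.
Qed.

(* The columns of [B] lying in the face, the others replaced by [0]. *)
Definition face_basis := B *m diag_mx (\row_j (a 0 j == 0)%:R).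

Lemma lin_face_basis y : lin g0 (face_basis *m y).
Proof.
rewrite /face_basis -mulmxA mul_diag_mx mulmx_sum_col.
apply: lin_sum_support face0 _ => j; rewrite 2!mxE.
by case: (eqVneq (a 0 j) 0) => [/face_col // | _]; rewrite mul0r eqxx.
Qed.

Lemma lin_face_star_of_annihilator f :
  f *m face_basis = 0 -> lin (face_star (simplicial_cone B) g0) f.
Proof.
move=> /rowP f0; rewrite -(mulmxK B_unit f) mulmx_sum_row.
apply: lin_sum_support face_star0 _ => j fBj; apply: face_star_row_invmx.
apply: contra fBj => /eqP aj0; have := f0 j.
rewrite /face_basis mulmxA mul_mx_diag mxE [(\row__ _) 0 j]mxE aj0 eqxx mulr1.
by move=> ->; rewrite mxE.
Qed.

End SimplicialFace.

Lemma integral_multiples_eq0 (q : rat) :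
  (forall s : rat, exists z : int, s * q = z%:~R) -> q = 0.
Proof.
move=> Hq; apply/eqP/negP => /negP q0; have [z] := Hq (2 * q)^-1.
rewrite invfM -mulrA mulVf // mulr1 => z2.
have : (1 : rat) = (2 * z)%:~R by rewrite intrM -z2 mulfV.
by rewrite -[1]/(1%:~R) => /intr_inj; lia.
Qed.

(* The diagonal factor produced by [int_Smith_normal_form]. *)
Definition smith_diag p r (d : seq int) : 'M[int]_(p, r) :=
  \matrix_(i, j) (d`_i *+ (i == j :> nat)).

Section SmithDiagDual.
Variables (p r : nat) (d : seq int) (w : 'rV[rat]_r).
Let D := smith_diag p r d.
Hypothesis w_int : forall y : 'cV[rat]_r,
  (exists z, ratmx D *m y = intcv z) -> exists z : int, (w *m y) 0 0 = z%:~R.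

Lemma smith_diag_delta (s : rat) j :
  ratmx D *m (s *: delta_mx j (0 : 'I_1)) = \col_i (s * (d`_i *+ (i == j :> nat))%:~R).
Proof.
by apply/matrixP=> i k; rewrite ord1 -scalemxAr -colE !mxE mulrC.
Qed.

Lemma smith_diag_dual_coord j :
  exists z : int, w 0 j = z%:~R * (d`_j *+ (j < p)%N)%:~R.
Proof.
have wE s : (w *m (s *: delta_mx j (0 : 'I_1))) 0 0 = s * w 0 j.
  by rewrite -scalemxAr mxE -colE mxE.
have DE i s :
    (ratmx D *m (s *: delta_mx j (0 : 'I_1))) i 0 = s * (d`_i *+ (i == j :> nat))%:~R.
  by rewrite smith_diag_delta mxE.
case: (eqVneq (d`_j *+ (j < p)%N) 0) => [e0|e_nz].
  exists 0; rewrite mul0r; apply: integral_multiples_eq0 => s.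
  have [|z] := @w_int (s *: delta_mx j (0 : 'I_1)); last by rewrite wE; exists z.
  exists 0; apply/matrixP=> i k; rewrite ord1 DE !mxE.
  case: (eqVneq (i : nat) j) => [ij|_]; last by rewrite mulr0n mulr0.
  by move: e0; rewrite -ij ltn_ord => ->; rewrite mulr0.
have jp : (j < p)%N by apply: contraNT e_nz => /negbTE ->; rewrite mulr0n.
rewrite jp mulr1n in e_nz *; have e_nz' : (d`_j)%:~R != 0 :> rat by rewrite intr_eq0.
have [|z] := @w_int ((d`_j)%:~R^-1 *: delta_mx j (0 : 'I_1)).
  exists (delta_mx (Ordinal jp) 0); apply/matrixP=> i k; rewrite ord1 DE !mxE.
  have -> : (i == j :> nat) = (i == Ordinal jp) by [].
  by case: eqVneq => [->|_]; rewrite ?mulr1n ?mulVf // mulr0n mulr0.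
by rewrite wE => wj; exists z; rewrite -wj mulrAC mulVf // mul1r.
Qed.

Lemma smith_diag_dual : exists h : 'rV[int]_p, intrv h *m ratmx D = w.
Proof.
pose h := \row_(i < p)
  (if insub (i : nat) is Some j then numq (w 0 j / (d`_i)%:~R) else 0).
exists h; apply/rowP=> j; rewrite mxE; have [z wj] := smith_diag_dual_coord j.
case: (ltnP j p) => jp; last first.
  rewrite wj ltnNge jp mulr0n mulr0 big1 // => i _; rewrite !mxE.
  by rewrite ltn_eqF ?mulr0n ?mulr0 // (leq_trans (ltn_ord i) jp).
rewrite (bigD1 (Ordinal jp)) //= big1 ?addr0 => [|i /negbTE ij]; last first.
  by rewrite !mxE (_ : (i == j :> nat) = false) ?mulr0n ?mulr0.
rewrite !mxE eqxx mulr1n (_ : insub (j : nat) = Some j) ?valK //= wj jp mulr1n.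
have [->|dj] := eqVneq d`_j 0; first by rewrite !mulr0.
by rewrite mulfK ?intr_eq0 // numq_int.
Qed.

End SmithDiagDual.

Lemma int_mx_dual p r (C : 'M[int]_(p, r)) (v : 'rV[rat]_r) :
  (forall y, (exists z, ratmx C *m y = intcv z) -> exists z : int, (v *m y) 0 0 = z%:~R) ->
  exists g : 'rV[int]_p, intrv g *m ratmx C = v.
Proof.
move=> v_int; have [L L_unit [R R_unit [d _ CE]]] := int_Smith_normal_form C.
pose Ri := ratmx (invmx R).
have RRi : ratmx R *m Ri = 1%:M by rewrite -ratmxM mulmxV ?ratmx1.
have RiR : Ri *m ratmx R = 1%:M by rewrite -ratmxM mulVmx ?ratmx1.
have [|h hD] := smith_diag_dual (p := p) (d := d) (w := v *m Ri).
  move=> y [z Dz]; rewrite -mulmxA; apply: v_int; exists (L *m z).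
  by rewrite CE !ratmxM -!mulmxA (mulmxA (ratmx R)) RRi mul1mx Dz intcvM.
exists (h *m invmx L).
rewrite /intrv CE -!ratmxM !mulmxA mulmxKV // !ratmxM -/(intrv h) hD.
by rewrite -mulmxA RiR mulmx1.
Qed.

Lemma mx_clear_denom p q (A : 'M[rat]_(p, q)) :
  exists (m : int) (A' : 'M[int]_(p, q)), 0 < m /\ m%:~R *: A = ratmx A'.
Proof.
pose m := \prod_(ij : 'I_p * 'I_q) denq (A ij.1 ij.2).
exists m, (\matrix_(i, j) (numq (A i j) *
   \prod_(ij : 'I_p * 'I_q | ij != (i, j)) denq (A ij.1 ij.2))).
split; first by apply: prodr_gt0 => ij _; exact: denq_gt0.
apply/matrixP=> i j; rewrite !mxE /m (bigD1 (i, j)) //= !intrM.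
by rewrite mulrC mulrA -numqE mulrC.
Qed.

Lemma rat_mx_dual p r (C : 'M[rat]_(p, r)) (v : 'rV[rat]_r) :
  (forall y, (exists z, C *m y = intcv z) -> exists z : int, (v *m y) 0 0 = z%:~R) ->
  exists g : 'rV[int]_p, intrv g *m C = v.
Proof.
move=> v_int; have [m [C' [m_gt0 C'E]]] := mx_clear_denom C.
have m_nz : (m%:~R : rat) != 0 by rewrite intr_eq0 lt0r_neq0.
have [|g gC'] := @int_mx_dual _ _ C' (m%:~R *: v).
  move=> y [z C'y]; have [|z' vy] := @v_int (m%:~R *: y).
    by exists z; rewrite -scalemxAr scalemxAl C'E.
  by exists z'; rewrite -scalemxAl scalemxAr.
exists g; apply: (scalerI m_nz); by rewrite scalemxAr C'E.
Qed.

Lemma additive_pairZ n (psi : 'cV[int]_n -> int) :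
  (forall x y, psi (x + y) = psi x + psi y) ->
  forall x, psi x = pairZ (\row_i psi (delta_mx i 0)) x.
Proof.
move=> psiD; have psi0 : psi 0 = 0.
  by apply: (addrI (psi 0)); rewrite -psiD !addr0.
have psiN v : psi (- v) = - psi v.
  by apply: (addrI (psi v)); rewrite -psiD !subrr psi0.
have psiMn v k : psi (v *+ k) = psi v *+ k.
  by elim: k => [|k IH]; rewrite ?mulr0n // !mulrS psiD IH.
have psiZ (z : int) v : psi (z *: v) = z * psi v.
  case: z => k; first by rewrite -natz scaler_nat psiMn mulr_natl.
  by rewrite NegzE scaleNr psiN -natz scaler_nat psiMn mulNr mulr_natl.
move=> x; rewrite {1}[x]matrix_sum_delta (big_morph psi psiD psi0).
rewrite /pairZ mxE; apply: eq_bigr => i _.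
by rewrite big_ord1 psiZ !mxE mulrC.
Qed.

Lemma mx_surj_right_inverse (R : nzRingType) k n (Q : 'M[R]_(k, n)) :
  (forall y : 'cV_k, exists x, Q *m x = y) -> exists S, Q *m S = 1%:M.
Proof.
move=> Qsurj; have preim j : exists x, Q *m x == col j 1%:M.
  by have [x Qx] := Qsurj (col j 1%:M); exists x; rewrite Qx.
exists (\matrix_(i, j) xchoose (preim j) i 0); apply/matrixP => i j.
have /matrixP/(_ i 0) := eqP (xchooseP (preim j)); rewrite !mxE => <-.
by apply: eq_bigr => l _; rewrite mxE.
Qed.

Section ProjectedLattice.
Variables (n k : nat) (Q : 'M[int]_(k, n)) (L : 'cV[int]_n -> Prop).
Hypothesis Q_surj : forall y : 'cV_k, exists x, Q *m x = y.

Lemma kernel_functional_extends (phi : 'cV[int]_n -> int) :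
  (forall x y, Q *m x = 0 -> Q *m y = 0 -> phi (x + y) = phi x + phi y) ->
  exists f : 'rV[int]_n, forall x, Q *m x = 0 -> pairZ f x = phi x.
Proof.
move=> phiD; have [S QS] := mx_surj_right_inverse Q_surj.
pose proj (x : 'cV_n) := x - S *m (Q *m x).
have Q_proj x : Q *m proj x = 0 by rewrite mulmxBr mulmxA QS mul1mx subrr.
have psiD x y : phi (proj (x + y)) = phi (proj x) + phi (proj y).
  by rewrite -phiD // /proj !mulmxDr opprD addrACA.
exists (\row_i phi (proj (delta_mx i 0))) => x Qx.
by rewrite -(additive_pairZ psiD) /proj Qx mulmx0 subr0.
Qed.

Hypothesis ker_coord : forall w i, Q *m w = 0 ->
  exists f, (forall x, L x -> pairZ f x = 0) /\ pairZ f w = w i 0.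

Lemma ker_coord_injective_on x y : L x -> L y -> Q *m x = Q *m y -> x = y.
Proof.
move=> Lx Ly Qxy; apply/matrixP=> i j; rewrite ord1; apply/eqP.
have [|f [fL fxy]] := ker_coord i (w := x - y); first by rewrite mulmxBr Qxy subrr.
by move: fxy; rewrite pairZB !fL // subrr !mxE => /eqP; rewrite eq_sym subr_eq0.
Qed.

(* The [i]-th coordinate of [x - m *: e] is [f (x - m *: e) = - m * f e] for the
   functional [f] given by [ker_coord], as [f] kills [x]. *)
Lemma ker_coord_primitive_image :
  (forall (m : int) x, m != 0 -> L (m *: x) -> L x) ->
  primitive (fun z => exists x, L x /\ Q *m x = z).
Proof.
move=> L_div y m m_nz [x [Lx Qx]]; have [e Qe] := Q_surj y.
pose w := x - m *: e.
have Qw : Q *m w = 0 by rewrite mulmxBr -scalemxAr Qe Qx subrr.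
have m_dvd i : (m %| w i ord0)%Z.
  have [f [fL <-]] := ker_coord i Qw.
  by apply/dvdzP; exists (- pairZ f e); rewrite pairZB pairZZ fL // sub0r mulNr mulrC.
pose w' := \col_i (w i ord0 %/ m)%Z.
have w'E : m *: w' = w.
  by apply/matrixP=> i j; rewrite ord1 [LHS]mxE [w' _ _]mxE mulrC divzK.
have Qw' : Q *m w' = 0.
  apply/matrixP=> i j; have /matrixP/(_ i j) := Qw.
  by rewrite -w'E -scalemxAr !mxE => /eqP; rewrite mulf_eq0 (negbTE m_nz) => /eqP.
exists (e + w'); split; last by rewrite mulmxDr Qe Qw' addr0.
by apply: (L_div m) => //; rewrite scalerDr w'E addrC subrK.
Qed.

End ProjectedLattice.

Lemma primitive_image_integral n k (Q : 'M[int]_(k, n)) (L : 'cV[int]_n -> Prop)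
    (u : 'cV[rat]_n) (m : int) (b : 'cV[int]_n) :
  (forall (c : int) x, L x -> L (c *: x)) ->
  (forall x y, L x -> L y -> Q *m x = Q *m y -> x = y) ->
  primitive (fun z => exists x, L x /\ Q *m x = z) ->
  m != 0 -> L b -> m%:~R *: u = intcv b -> (exists z, ratmx Q *m u = intcv z) ->
  exists l, L l /\ u = intcv l.
Proof.
move=> L_scale Q_inj Q_prim m_nz Lb bE [z Qu].
have Qb : Q *m b = m *: z.
  by apply: intcv_inj; rewrite intcvM intcvZ -bE -scalemxAr Qu.
have [|l [Ll Ql]] := Q_prim z m m_nz; first by exists b.
have lb : m *: l = b.
  by apply: Q_inj => //; [exact: L_scale | rewrite -scalemxAr Ql Qb].
exists l; split=> //; apply: (scalerI (a := m%:~R)); first by rewrite intr_eq0.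
by rewrite bE -lb intcvZ.
Qed.

Theorem lemma3p7 (n k : nat) (Q : 'M[int]_(k, n)) (B : 'M[rat]_n)
    (gamma0 : 'cV[rat]_n -> Prop) :
  (forall y : 'cV[int]_k, exists x : 'cV[int]_n, Q *m x = y) ->
  B \in unitmx ->
  is_face (simplicial_cone B) gamma0 ->
  let gamma := simplicial_cone B in
  let delta0 := face_star gamma gamma0 in
  let M := fun x : 'cV[int]_n => Q *m x = 0 in
  let L := fun x : 'cV[int]_n => lin gamma0 (intcv x) in
  ((forall phi : 'cV[int]_n -> int,
      (forall x y, M x -> M y -> phi (x + y) = phi x + phi y) ->
      exists f : 'rV[int]_n, lin delta0 (intrv f) /\
        (forall x, M x -> pairZ f x = phi x))
   <->
   ((forall x y, L x -> L y -> Q *m x = Q *m y -> x = y) /\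
    primitive (fun z : 'cV[int]_k => exists x, L x /\ Q *m x = z))).
Proof.
move=> Q_surj B_unit [u [u_dual g0E]] gamma delta0 M L.
have delta0_orth f x : lin delta0 (intrv f) -> L x -> pairZ f x = 0.
  by move=> f0 Lx; apply: (@intr_inj rat); rewrite pairZ_intr (lin_face_star_orth Lx f0).
split=> [ext | [Q_inj Q_prim] phi phiD].
  have ker_coord w i : M w ->
      exists f, (forall x, L x -> pairZ f x = 0) /\ pairZ f w = w i 0.
    move=> Mw; have [|f [f0 fM]] := ext (fun v => v i 0).
      by move=> ? ? _ _; rewrite mxE.
    by exists f; split=> [x /(delta0_orth _ _ f0) | ]; last exact: fM.
  split; first exact: ker_coord_injective_on.
  exact: ker_coord_primitive_image (@lin_intcv_divZ _ _).
have [p pM] := kernel_functional_extends Q_surj phiD.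
pose W := face_basis B u.
have [|t tQW] := @rat_mx_dual _ _ (ratmx Q *m W) (intrv p *m W).
  move=> y Wy; have [m [b [m_gt0 bE]]] := mx_clear_denom (W *m y).
  have [||l [Ll lE]] := primitive_image_integral (@lin_intcvZ _ _) Q_inj Q_prim
    (lt0r_neq0 m_gt0) _ bE.
  - by rewrite /L /intcv -bE; apply: lin_scale; exact: lin_face_basis.
  - by rewrite mulmxA.
  by exists (pairZ p l); rewrite pairZ_intr -lE -mulmxA.
exists (p - t *m Q); split; last first.
  by move=> x Mx; rewrite /pairZ mulmxBl -mulmxA Mx mulmx0 subr0; exact: pM.
apply: (lin_face_star_of_annihilator B_unit u_dual) => //.
by rewrite /intrv map_mxB ratmxM mulmxBl -mulmxA tQW subrr.
Qed.
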